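(* (Main) Let $\mathbb{K}$ be a field, $n>1$, $a=\sum_{j=0}^d c_j s^j\in\mathbb{K}[s]^n$ a non-zero row vector of degree $d$ ($c_j\in\mathbb{K}^n$), and $A\in\mathbb{K}^{(2d+1)\times n(d+1)}$ the matrix whose $(i,\,kn+r)$ entry ($1\le i\le 2d+1$, $0\le k\le d$, $1\le r\le n$) is the $r$-th entry of $c_{i-1-k}$ (zero if $i-1-k\notin\{0,\dots,d\}$). With $\tilde q$ and $b_r$ as in the context, the set $u=\{b_r^\flat\mid r\in\tilde q\}$ is a $\mu$-basis of $a$.
   Context: A column of a matrix is pivotal if it is either the first column and non-zero, or linearly independent of all previous columns; otherwise non-pivotal. $p$ is the set of pivotal indices of $A$, $q$ the set of non-pivotal indices, and $\tilde q=\{\min\varrho\mid\varrho\in q/(n)\}$ the basic non-pivotal indices (minimal elements of the classes of $q$ modulo $n$). For $i\in q$ write uniquely $A_{*i}=\sum_{\{j\in p\mid j<i\}}\alpha^{(i)}_jA_{*j}$ ($A_{*j}$ the $j$-th column) and set $b_i=e_i-\sum_{\{j\in p\mid j<i\}}\alpha^{(i)}_je_j$ ($e_i$ standard basis vectors of $\mathbb{K}^{n(d+1)}$). For $v=[w_0;\dots;w_d]\in\mathbb{K}^{n(d+1)}$ ($w_i\in\mathbb{K}^n$), $v^\flat=\sum_i s^iw_i\in\mathbb{K}[s]^n$. $\mathrm{syz}(a)=\{h\in\mathbb{K}[s]^n\mid a\,h=0\}$. For non-zero $h\in\mathbb{K}[s]^n$, $LV(h)\in\mathbb{K}^n$ is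 the vector of coefficients of $s^{\deg h}$ in its entries, $\deg h=\max_i\deg h_i$. A subset $u=\{u_1,\dots,u_{n-1}\}\subset\mathbb{K}[s]^n$ is a $\mu$-basis of $a$ if: (1) $u$ has exactly $n-1$ elements; (2) $LV(u_1),\dots,LV(u_{n-1})$ are linearly independent over $\mathbb{K}$; (3) $u$ is a basis of the $\mathbb{K}[s]$-module $\mathrm{syz}(a)$. *)

From HB Require Import structures.
From mathcomp Require Import all_boot all_order all_algebra.
Set Implicit Arguments. Unset Strict Implicit. Unset Printing Implicit Defensive.
Import Order.TTheory GRing.Theory Num.Theory.
Local Open Scope ring_scope.

Section MuBasis.
Variable K : fieldType.

Definition pdeg m1 m2 (M : 'M[{poly K}]_(m1, m2)) : nat :=
  (\max_(i < m1) \max_(j < m2) size (M i j)).-1.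

Definition LV n (h : 'cV[{poly K}]_n) : 'cV[K]_n :=
  \col_i (h i 0)`_(pdeg h).

Definition in_syz n (a : 'rV[{poly K}]_n) (h : 'cV[{poly K}]_n) : bool :=
  a *m h == 0.

(* u (a finite set, given by a list of its elements) is a mu-basis of a *)
Definition mu_basis n (a : 'rV[{poly K}]_n) (u : seq 'cV[{poly K}]_n) : Prop :=
  let us := undup u in
  [/\ size us = (n - 1)%N,
      free [seq LV h | h <- us],
      all (in_syz a) us,
      (forall h, a *m h = 0 ->
         exists p : 'I_(size us) -> {poly K}, h = \sum_i p i *: us`_i)
    & (forall p : 'I_(size us) -> {poly K},
         \sum_i p i *: us`_i = 0 -> forall i, p i = 0)].

(* nat-indexed access to entries (0 outside range) *)
Definition aent n (a : 'rV[{poly K}]_n) (r : nat) : {poly K} :=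
  if insub r is Some r' then a 0 r' else 0.
Definition vent N (v : 'cV[K]_N) (c : nat) : K :=
  if insub c is Some c' then v c' 0 else 0.

(* the (2d+1) x n(d+1) matrix A; 0-based: row i, column k*n + r holds the
   r-th entry of c_(i-k) (0 if i-k not in {0..d}) *)
Definition Amat n d (a : 'rV[{poly K}]_n) : 'M[K]_(2 * d + 1, n * (d + 1)) :=
  \matrix_(i, c) (let k := (c %/ n)%N in let r := (c %% n)%N in
                  if (k <= i)%N then (aent a r)`_(i - k) else 0).

Definition pivotal m N (M : 'M[K]_(m, N)) (j : 'I_N) : bool :=
  ~~ ((col j M)^T <= (\sum_(j' < N | (j' < j)%N) <<(col j' M)^T>>)%MS)%MS.

Definition qtilde m N (M : 'M[K]_(m, N)) (n : nat) : {set 'I_N} :=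
  [set i : 'I_N | ~~ pivotal M i &
     [forall i' : 'I_N, (~~ pivotal M i' && (i' %% n == i %% n)%N) ==> (i <= i')%N]].

Definition bvec m N (M : 'M[K]_(m, N)) (alpha : 'I_N -> 'I_N -> K) (i : 'I_N)
  : 'cV[K]_N :=
  delta_mx i 0 - \sum_(j < N | pivotal M j && (j < i)%N) alpha i j *: delta_mx j 0.

Definition flat n d (v : 'cV[K]_(n * (d + 1))) : 'cV[{poly K}]_n :=
  \col_(r < n) \sum_(k < d + 1) (vent v (k * n + r))%:P * 'X^k.

End MuBasis.

(* Under v |-> v^flat, row t of A v is the coefficient of s^t in a v^flat, so ker A is the
   space of syzygies of degree at most d. Order the positions of a polynomial vector h by
   (deg h, index): if the last nonzero entry of LV h is at rho, then the corresponding
   kernel vector of A has its last nonzero entry in column deg h * n + rho, which is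
   therefore non-pivotal. Conversely b_r^flat is a syzygy of degree r div n whose leading
   vector ends with a 1 at r mod n. Hence every syzygy can be reduced, position by
   position, by the b_r^flat with r in q~, as long as its last leading position rho is a
   residue hit by q~. Exactly one residue mod n is missed: at least one, since otherwise n
   syzygies with triangular leading vectors give a matrix H with aH = 0 and det H <> 0; at
   most one, since for two missed residues r1, r2 the syzygy a_r2 e_r1 - a_r1 e_r2 has
   degree at most d. So |q~| = n - 1, and the distinct last positions of the leading
   vectors make them independent over K and the b_r^flat independent over K[s]. *)

From HB Require Import structures.
From mathcomp Require Import all_boot all_order all_algebra.
From mathcomp Require Import perm zify.
Set Implicit Arguments. Unset Strict Implicit. Unset Printing Implicit Defensive.
Import Order.TTheory GRing.Theory Num.Theory.
Local Open Scope ring_scope.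

Section CoefTop.
Variable R : nzRingType.
Implicit Types p q : {poly R}.

Lemma coefM_top p q m k :
  (size p <= m.+1)%N -> (size q <= k.+1)%N -> (p * q)`_(m + k) = p`_m * q`_k.
Proof.
move=> /leq_sizeP sp /leq_sizeP sq.
rewrite coefM (bigD1 (Ordinal (ltn_addr k (ltnSn m)))) //= addKn big1 ?addr0 //.
move=> j; rewrite -val_eqE /= => njm.
case: (ltngtP j m) njm => // [ltjm|ltmj] _.
  rewrite sq ?mulr0 //; move: (nat_of_ord j) ltjm => x; lia.
by rewrite sp ?mul0r.
Qed.

Lemma size_polyM_bound p q m k :
  (size p <= m.+1)%N -> (size q <= k.+1)%N -> (size (p * q)%R <= (m + k).+1)%N.
Proof.
move=> sp sq; apply: leq_trans (size_polyMleq p q) _.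
move: sp sq; case: (size p) => [|sp'] //=; case: (size q) => [|sq'] //=; lia.
Qed.

Lemma coef_prod_top (I : Type) (r : seq I) (P : I -> {poly R}) (e : I -> nat) :
  (forall i, (size (P i) <= (e i).+1)%N) ->
  (size (\prod_(i <- r) P i)%R <= (\sum_(i <- r) e i).+1)%N /\
  (\prod_(i <- r) P i)`_(\sum_(i <- r) e i) = \prod_(i <- r) (P i)`_(e i).
Proof.
move=> sizeP; elim: r => [|x r [IHsize IHcoef]]; first by rewrite !big_nil size_poly1 coef1.
rewrite !big_cons; split; first exact: size_polyM_bound.
by rewrite coefM_top // IHcoef.
Qed.

End CoefTop.

Lemma coef_det_top (R : comNzRingType) n (H : 'M[{poly R}]_n) (e : 'I_n -> nat) :
  (forall i j, (size (H i j) <= (e j).+1)%N) ->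
  (\det H)`_(\sum_j e j) = \det (\matrix_(i, j) (H i j)`_(e j)).
Proof.
move=> sizeH; rewrite /determinant coef_sum; apply: eq_bigr => s _.
have -> : (\sum_j e j = \sum_i e (s i))%N by rewrite (reindex_inj (@perm_inj _ s)).
have [_ coef_prod] := coef_prod_top (index_enum _) (fun i => sizeH i (s i)).
under [in RHS]eq_bigr do rewrite mxE.
by rewrite !mulr_sign; case: odd_perm; rewrite ?coefN coef_prod.
Qed.

Section LeadingVectors.
Variable K : fieldType.

Lemma size_pdeg m1 m2 (M : 'M[{poly K}]_(m1, m2)) i j :
  (size (M i j) <= (pdeg M).+1)%N.
Proof.
rewrite /pdeg; apply: leq_trans (leqSpred _).
apply: leq_trans (leq_bigmax i); exact: (leq_bigmax j).
Qed.

Lemma pdeg_leq m1 m2 (M : 'M[{poly K}]_(m1, m2)) k :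
  (forall i j, size (M i j) <= k.+1)%N -> (pdeg M <= k)%N.
Proof.
move=> sizeM; rewrite /pdeg.
have : (\max_(i < m1) \max_(j < m2) size (M i j) <= k.+1)%N.
  by apply/bigmax_leqP => i _; apply/bigmax_leqP => j _.
lia.
Qed.

Lemma coef_gt_pdeg m1 m2 (M : 'M[{poly K}]_(m1, m2)) k i j :
  (pdeg M < k)%N -> (M i j)`_k = 0.
Proof. by move=> ltMk; apply: (leq_sizeP _ _ (leq_trans (size_pdeg M i j) ltMk)). Qed.

Lemma pdeg_eq m1 m2 (M : 'M[{poly K}]_(m1, m2)) k i j :
  (forall i j, size (M i j) <= k.+1)%N -> (M i j)`_k != 0 -> pdeg M = k.
Proof.
move=> sizeM nz_k; apply/eqP; rewrite eqn_leq pdeg_leq //= leqNgt.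
by apply: contra nz_k => /coef_gt_pdeg ->.
Qed.

Lemma LV_neq0 n (h : 'cV[{poly K}]_n) : h != 0 -> LV h != 0.
Proof.
apply: contraNN => /eqP LV0.
have size_lt i : (size (h i ord0) <= pdeg h)%N.
  rewrite -ltnS ltn_neqAle size_pdeg andbT; apply/eqP => sz.
  have := congr1 (fun w : 'cV[K]_n => w i 0) LV0.
  rewrite !mxE -[pdeg h]/(pdeg h).+1.-1 -sz -lead_coefE => /eqP.
  by rewrite lead_coef_eq0 => /eqP hi0; move: sz; rewrite hi0 size_poly0.
case Eh: (pdeg h) size_lt => [|D] size_lt.
  apply/eqP/matrixP => i j; rewrite (ord1 j) mxE; exact/size_poly_leq0P/size_lt.
suff : (pdeg h <= D)%N by rewrite Eh ltnn.
by apply: pdeg_leq => i j; rewrite (ord1 j) size_lt.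
Qed.

Definition is_lastnz n (w : 'cV[K]_n) (r : 'I_n) :=
  w r 0 != 0 /\ forall j : 'I_n, (r < j)%N -> w j 0 = 0.

Lemma lastnz_exists n (w : 'cV[K]_n) : w != 0 -> exists r, is_lastnz w r.
Proof.
move=> w_neq0; have [i0 wi0] : exists i, w i 0 != 0.
  apply/existsP; apply: contraR w_neq0; rewrite negb_exists => /forallP w0.
  by apply/eqP/matrixP => i j; rewrite (ord1 j) mxE; exact/eqP/negbNE/w0.
have [r wr r_max] := @arg_maxnP _ i0 (fun i => w i 0 != 0) val wi0.
exists r; split => // j; apply: contraTeq; rewrite -leqNgt; exact: r_max.
Qed.

Lemma lastnz_uniq n (w : 'cV[K]_n) r1 r2 :
  is_lastnz w r1 -> is_lastnz w r2 -> r1 = r2.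
Proof.
move=> [w1 r1_max] [w2 r2_max]; apply/val_inj.
case: (ltngtP r1 r2) => // lt12; first by rewrite r1_max ?eqxx in w2.
by rewrite r2_max ?eqxx in w1.
Qed.

Lemma lastnz_free m n (w : 'I_m -> 'cV[K]_n) (pos : 'I_m -> 'I_n) (c : 'I_m -> K) :
  injective pos -> (forall i, is_lastnz (w i) (pos i)) ->
  \sum_i c i *: w i = 0 -> forall i, c i = 0.
Proof.
move=> pos_inj w_pos sum0 i; apply/eqP/negPn/negP => ci.
have [i1 ci1 i1_max] := @arg_maxnP _ i (fun i => c i != 0) (fun i => val (pos i)) ci.
have := congr1 (fun v : 'cV[K]_n => v (pos i1) 0) sum0.
rewrite summxE (bigD1 i1) //= big1 ?addr0 => [|j ji1].
  by rewrite !mxE => /eqP; rewrite mulf_eq0 (negbTE ci1) (negbTE (w_pos i1).1).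
rewrite !mxE; have [->|cj] := eqVneq (c j) 0; first by rewrite mul0r.
rewrite (w_pos j).2 ?mulr0 // ltn_neqAle; apply/andP; split; last exact: i1_max.
by apply: contra ji1 => /eqP/val_inj/pos_inj ->.
Qed.

Lemma LV_lastnz_poly_free m n (g : 'I_m -> 'cV[{poly K}]_n) (pos : 'I_m -> 'I_n)
    (p : 'I_m -> {poly K}) :
  injective pos -> (forall i, is_lastnz (LV (g i)) (pos i)) ->
  \sum_i p i *: g i = 0 -> forall i, p i = 0.
Proof.
move=> pos_inj g_pos sum0 i; apply/eqP/negPn/negP => pi.
pose deg i := ((size (p i)).-1 + pdeg (g i))%N.
have [i1 pi1 i1_max] := @arg_maxnP _ i (fun i => p i != 0) deg pi.
pose D := deg i1.
(* The coefficients of s^D, D the largest degree of a term p_i g_i, give a K-linear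
   relation between the leading vectors. *)
pose c i := if p i != 0 then (p i)`_(D - pdeg (g i)) else 0.
have LVsum0 : \sum_i c i *: LV (g i) = 0.
  apply/matrixP => j z; rewrite (ord1 z) summxE mxE.
  have := congr1 (fun v : 'cV[{poly K}]_n => (v j 0)`_D) sum0.
  rewrite summxE coef_sum mxE coef0 => sumD; rewrite -[RHS]sumD; apply: eq_bigr => l _.
  rewrite !mxE /c; case: ifP => [pl|/negbT/negPn/eqP ->]; last by rewrite !mul0r coef0.
  have degl : ((size (p l)).-1 + pdeg (g l) <= D)%N := i1_max l pl.
  have gl_le : (pdeg (g l) <= D)%N := leq_trans (leq_addl _ _) degl.
  have size_pl : (size (p l) <= (D - pdeg (g l)).+1)%N.
    by rewrite (leq_trans (leqSpred _)) // ltnS leq_subRL // addnC.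
  by rewrite -[in RHS](subnK gl_le) coefM_top ?size_pdeg.
have := lastnz_free pos_inj g_pos LVsum0 i1; rewrite /c pi1 /D /deg addnK => /eqP.
by rewrite -lead_coefE lead_coef_eq0 (negbTE pi1).
Qed.

Lemma syz_lastnz_family_eq0 n (a : 'rV[{poly K}]_n) (h : 'I_n -> 'cV[{poly K}]_n) :
  (forall r, a *m h r = 0) -> (forall r, is_lastnz (LV (h r)) r) -> a = 0.
Proof.
move=> h_syz h_pos; pose H := \matrix_(i, j) h j i 0.
have sizeH i j : (size (H i j) <= (pdeg (h j)).+1)%N by rewrite mxE size_pdeg.
(* The top-degree coefficient of det H is the determinant of the triangular matrix of
   leading vectors. *)
have detH_neq0 : \det H != 0.
  apply/eqP => detH0; have := coef_det_top sizeH.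
  rewrite detH0 coef0 -det_tr det_trig => [/esym/eqP|]; last first.
    apply/is_trig_mxP => i j lt_ij; rewrite !mxE.
    by have := (h_pos i).2 j lt_ij; rewrite mxE.
  rewrite prodf_seq_eq0 => /hasP[i _]; rewrite !mxE.
  by have := (h_pos i).1; rewrite mxE => /negbTE ->.
have aH0 : a *m H = 0.
  apply/matrixP => i j; rewrite (ord1 i); transitivity ((a *m h j) 0 0).
    by rewrite !mxE; apply: eq_bigr => k _; rewrite mxE.
  by rewrite h_syz !mxE.
apply/matrixP => i j; have /matrixP/(_ i j) := congr1 (mulmx^~ (\adj H)) aH0.
rewrite -mulmxA mul_mx_adj mul_mx_scalar mul0mx !mxE => /eqP.
by rewrite mulf_eq0 (negbTE detH_neq0) => /eqP.
Qed.

(* One step of the division algorithm: the leading position, ordered by degree and then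
   by index, strictly decreases. *)
Lemma LV_reduce n (g h : 'cV[{poly K}]_n) rho :
  (pdeg g <= pdeg h)%N -> is_lastnz (LV g) rho -> LV g rho 0 = 1 -> is_lastnz (LV h) rho ->
  let h' := h - ((LV h rho 0)%:P * 'X^(pdeg h - pdeg g)) *: g in
  forall rho', is_lastnz (LV h') rho' -> (pdeg h' * n + rho' < pdeg h * n + rho)%N.
Proof.
move=> le_gh [_ g_gt] g_rho [_ h_gt] h' rho' [h'_rho' _].
have h'E i t : (h' i 0)`_t = (h i 0)`_t -
    LV h rho 0 * (if (t < pdeg h - pdeg g)%N then 0 else (g i 0)`_(t - (pdeg h - pdeg g))).
  by rewrite !mxE coefB -mulrA coefCM coefXnM.
have le_h'h : (pdeg h' <= pdeg h)%N.
  apply: pdeg_leq => i j; rewrite (ord1 j); apply/leq_sizeP => t lt_ht.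
  rewrite h'E coef_gt_pdeg // ifN; last by rewrite -leqNgt (leq_trans (leq_subr _ _) (ltnW lt_ht)).
  by rewrite coef_gt_pdeg ?mulr0 ?subr0 //; lia.
have h'_top (i : 'I_n) : (rho <= i)%N -> (h' i 0)`_(pdeg h) = 0.
  rewrite h'E ltnNge leq_subr /= subKn // leq_eqVlt => /orP[/eqP/val_inj <-|lt_i].
    by move: g_rho; rewrite mxE => ->; rewrite mulr1 mxE subrr.
  by move: (g_gt i lt_i) (h_gt i lt_i); rewrite !mxE => -> ->; rewrite mulr0 subrr.
have [lt_h'h|ge_h'h] := ltnP (pdeg h') (pdeg h).
  have : ((pdeg h').+1 * n <= pdeg h * n)%N by rewrite leq_mul2r lt_h'h orbT.
  by rewrite mulSnr; have := ltn_ord rho'; lia.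
have eq_h'h : pdeg h' = pdeg h by apply/eqP; rewrite eqn_leq le_h'h.
rewrite eq_h'h ltn_add2l ltnNge; apply: contra h'_rho' => le_rho.
by rewrite mxE eq_h'h h'_top.
Qed.

Lemma kernel_lastnz_not_pivotal m N (M : 'M[K]_(m, N)) (v : 'cV[K]_N) c :
  M *m v = 0 -> is_lastnz v c -> ~~ pivotal M c.
Proof.
move=> Mv0 [vc0 v_gt]; rewrite /pivotal negbK; apply/sub_sums_genmxP.
exists (fun j => (- (v c 0)^-1 * v j 0)%:M); apply/matrixP => i k.
rewrite (ord1 i) [LHS]mxE [LHS]mxE summxE.
have := congr1 (fun w : 'cV[K]_m => w k 0) Mv0.
rewrite [LHS]mxE [RHS]mxE (bigD1 c) //= => Mk0.
have Mkc : M k c * v c 0 = - \sum_(j < N | (j < c)%N) M k j * v j 0.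
  apply/eqP; rewrite -addr_eq0 -[X in _ == X]Mk0; apply/eqP; congr (_ + _).
  rewrite [RHS]big_mkcond [LHS]big_mkcond; apply: eq_bigr => j _ /=.
  by rewrite -val_eqE /=; case: (ltngtP j c) => // /v_gt ->; rewrite mulr0.
have -> : M k c = (v c 0)^-1 * (M k c * v c 0) by rewrite mulrCA mulVf ?mulr1.
rewrite Mkc mulrN -mulNr mulr_sumr; apply: eq_bigr => j _.
rewrite [RHS]mxE big_ord1 [_%:M _ _]mxE [(col _ _)^T _ _]mxE [col _ _ _ _]mxE eqxx mulr1n.
by rewrite [M k j * _]mulrC mulrA.
Qed.

End LeadingVectors.

Lemma sum_nat_divmod (V : nmodType) (F : nat -> V) n m :
  \sum_(0 <= c < n * m) F c = \sum_(0 <= k < m) \sum_(0 <= r < n) F (k * n + r)%N.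
Proof.
rewrite mulnC big_nat_mul; apply: eq_bigr => k _.
rewrite -{1}[(k * n)%N]add0n big_addn mulSn addnK.
by apply: eq_bigr => r _; rewrite addnC.
Qed.

Section Span.
Variables (R : pzRingType) (V : lmodType R) (s : seq V).

Definition in_span (v : V) := exists c : 'I_(size s) -> R, v = \sum_i c i *: s`_i.

Lemma in_span0 : in_span 0.
Proof. by exists (fun=> 0); rewrite big1 // => i _; rewrite scale0r. Qed.

Lemma in_spanD u v : in_span u -> in_span v -> in_span (u + v).
Proof.
move=> [c ->] [c' ->]; exists (fun i => c i + c' i).
by rewrite -big_split; apply: eq_bigr => i _; rewrite scalerDl.
Qed.

Lemma in_spanZ (x : R) v : v \in s -> in_span (x *: v).
Proof.
move=> s_v; have lt_v : (index v s < size s)%N by rewrite index_mem.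
exists (fun i => if i == Ordinal lt_v then x else 0).
rewrite (bigD1 (Ordinal lt_v)) //= eqxx nth_index // big1 ?addr0 // => i /negbTE ->.
by rewrite scale0r.
Qed.

End Span.

Section Linearization.
Variables (K : fieldType) (n d : nat) (a : 'rV[{poly K}]_n).
Hypothesis n_gt0 : (0 < n)%N.
Hypothesis pdeg_a : pdeg a = d.
Local Notation N := (n * (d + 1))%N.
Local Notation A := (Amat d a).

Definition resid (c : nat) : 'I_n := Ordinal (ltn_pmod c n_gt0).

Lemma resid_divmod k (r : 'I_n) : resid (k * n + r) = r.
Proof. by apply/val_inj; rewrite /= modnMDl modn_small. Qed.

Lemma divn_divmod k (r : 'I_n) : ((k * n + r) %/ n = k)%N.
Proof. by rewrite divnMDl // divn_small // addn0. Qed.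

Lemma divmod_lt k (r : 'I_n) : (k < d + 1)%N -> (k * n + r < N)%N.
Proof. by move=> lt_k; have := ltn_ord r; nia. Qed.

Lemma vent_ord m (v : 'cV[K]_m) (c : 'I_m) : vent v c = v c 0.
Proof. by rewrite /vent; case: insubP => [c' _ /val_inj -> //|]; rewrite ltn_ord. Qed.

Lemma vent_out m (v : 'cV[K]_m) c : (m <= c)%N -> vent v c = 0.
Proof. by move=> le_mc; rewrite /vent insubF // ltnNge le_mc. Qed.

Lemma aent_ord (r : 'I_n) : aent a r = a 0 r.
Proof. by rewrite /aent; case: insubP => [r' _ /val_inj -> //|]; rewrite ltn_ord. Qed.

Lemma size_a r : (size (a 0 r)%R <= d.+1)%N.
Proof. by rewrite -pdeg_a size_pdeg. Qed.

Lemma flat_coef (v : 'cV[K]_N) (r : 'I_n) t :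
  (flat v r 0)`_t = if (t < d + 1)%N then vent v (t * n + r) else 0.
Proof.
rewrite mxE coef_sum; under eq_bigr => k _ do rewrite coefCM coefXn.
case: ifP => [lt_td|ge_td].
  rewrite (bigD1 (Ordinal lt_td)) //= eqxx mulr1 big1 ?addr0 // => k.
  by rewrite -val_eqE eq_sym /= => /negbTE ->; rewrite mulr0.
rewrite big1 // => k _; case: eqP => [eq_tk|]; last by rewrite mulr0.
by move: (ltn_ord k); rewrite -eq_tk ge_td.
Qed.

Lemma size_flat (v : 'cV[K]_N) r : (size (flat v r 0)%R <= d.+1)%N.
Proof. by apply/leq_sizeP => t le_dt; rewrite flat_coef ifN // -leqNgt addn1. Qed.

Lemma coef_syz_flat (v : 'cV[K]_N) (t : 'I_(2 * d + 1)) :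
  ((a *m flat v) 0 0)`_t = (A *m v) t 0.
Proof.
pose F c := (if (c %/ n <= t)%N then (aent a (c %% n))`_(t - c %/ n) else 0) * vent v c.
transitivity (\sum_(0 <= c < N) F c); last first.
  by rewrite big_mkord [RHS]mxE; apply: eq_bigr => c _; rewrite /F vent_ord mxE.
rewrite mxE coef_sum sum_nat_divmod exchange_big /= big_mkord.
apply: eq_bigr => r _; rewrite mxE mulr_sumr coef_sum big_mkord; apply: eq_bigr => k _.
rewrite mulrCA coefCM coefMXn /F mulrC.
rewrite divn_divmod modnMDl modn_small // aent_ord.
by case: ltnP => le_tk; rewrite ?mulr0 // subnKC.
Qed.

Lemma coef_syz_flat_high (v : 'cV[K]_N) t :
  (2 * d + 1 <= t)%N -> ((a *m flat v) 0 0)`_t = 0.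
Proof.
move=> le_t; rewrite mxE coef_sum big1 // => r _; apply/leq_sizeP: le_t.
by rewrite (leq_trans (size_polyM_bound (size_a r) (size_flat v r))) // addnn -mul2n addn1.
Qed.

Lemma flat_syzP (v : 'cV[K]_N) : a *m flat v = 0 <-> A *m v = 0.
Proof.
split=> [syz_v | Av0].
  by apply/matrixP => t j; rewrite (ord1 j) -coef_syz_flat syz_v !mxE coef0.
apply/matrixP => i j; rewrite (ord1 i) (ord1 j) [RHS]mxE; apply/polyP => t.
rewrite coef0; case: (ltnP t (2 * d + 1)) => [lt_t|]; last exact: coef_syz_flat_high.
by rewrite (coef_syz_flat v (Ordinal lt_t)) Av0 mxE.
Qed.

Definition unflat (h : 'cV[{poly K}]_n) : 'cV[K]_N :=
  \col_(c < N) (h (resid c) 0)`_(c %/ n).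

Lemma unflat_divmod (h : 'cV[{poly K}]_n) k (r : 'I_n) (lt_c : (k * n + r < N)%N) :
  unflat h (Ordinal lt_c) 0 = (h r 0)`_k.
Proof. by rewrite mxE /= resid_divmod divn_divmod. Qed.

Lemma unflatK (h : 'cV[{poly K}]_n) : (pdeg h <= d)%N -> flat (unflat h) = h.
Proof.
move=> le_hd; apply/matrixP => r j; rewrite (ord1 j); apply/polyP => t.
rewrite flat_coef; case: ifP => [lt_t|/negbT]; last first.
  by rewrite -leqNgt addn1 => lt_dt; rewrite coef_gt_pdeg // (leq_ltn_trans le_hd).
by rewrite -[(t * n + r)%N]/(val (Ordinal (divmod_lt r lt_t))) vent_ord unflat_divmod.
Qed.

Lemma syz_lastnz_not_pivotal (h : 'cV[{poly K}]_n) (r : 'I_n) :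
  a *m h = 0 -> (pdeg h <= d)%N -> is_lastnz (LV h) r ->
  exists2 c : 'I_N, val c = (pdeg h * n + r)%N & ~~ pivotal A c.
Proof.
move=> syz_h le_hd [LVr LV_gt]; have lt_hd : (pdeg h < d + 1)%N by rewrite addn1.
exists (Ordinal (divmod_lt r lt_hd)) => //.
apply: (@kernel_lastnz_not_pivotal _ _ _ _ (unflat h)).
  by apply/flat_syzP; rewrite unflatK.
split=> [|c /= lt_c]; first by rewrite unflat_divmod; move: LVr; rewrite mxE.
have c_divmod := divn_eq c n; have lt_cn := ltn_pmod c n_gt0.
rewrite mxE; have [lt_q|gt_q|eq_q] := ltngtP (c %/ n) (pdeg h).
- by exfalso; nia.
- exact: coef_gt_pdeg.
- have := LV_gt (resid c); rewrite mxE eq_q; apply; rewrite /=; nia.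
Qed.

Variable alpha : 'I_N -> 'I_N -> K.
Hypothesis alpha_spec : forall i : 'I_N, ~~ pivotal A i ->
  col i A = \sum_(j < N | pivotal A j && (j < i)%N) alpha i j *: col j A.
Local Notation b := (bvec A alpha).
Local Notation bflat r := (flat (bvec A alpha r)).

Lemma bvec_ker r : ~~ pivotal A r -> A *m b r = 0.
Proof.
move=> np_r; rewrite /bvec mulmxBr mulmx_sumr -colE alpha_spec //.
by apply/eqP; rewrite subr_eq0; apply/eqP/eq_bigr => j _; rewrite -scalemxAr -colE.
Qed.

Lemma bvec_ge (r c : 'I_N) : (r <= c)%N -> b r c 0 = (c == r)%:R.
Proof.
move=> le_rc; rewrite /bvec !mxE summxE big1 ?subr0 ?andbT // => j /andP[_ lt_jr].
by rewrite !mxE -val_eqE /= gtn_eqF ?mulr0 // (leq_trans lt_jr).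
Qed.

Lemma vent_bvec (r : 'I_N) c : (r < c)%N -> vent (b r) c = 0.
Proof.
move=> lt_rc; have [lt_cN|] := ltnP c N; last exact: vent_out.
rewrite -[c]/(val (Ordinal lt_cN)) vent_ord bvec_ge ?(ltnW lt_rc) //.
by rewrite -val_eqE /= gtn_eqF.
Qed.

Lemma coef_bflat_high (r : 'I_N) (j : 'I_n) t : (r %/ n < t)%N -> (bflat r j 0)`_t = 0.
Proof.
move=> lt_t; rewrite flat_coef; case: ifP => // _; apply: vent_bvec.
have := divn_eq r n; have := ltn_pmod r n_gt0; nia.
Qed.

Lemma coef_bflat_top (r : 'I_N) (j : 'I_n) :
  (r %% n <= j)%N -> (bflat r j 0)`_(r %/ n) = (j == resid r)%:R.
Proof.
have lt_rN : (r %/ n < d + 1)%N by rewrite ltn_divLR // [X in (_ < X)%N]mulnC.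
rewrite flat_coef lt_rN leq_eqVlt => /orP[/eqP eq_rj|lt_rj].
  have -> : j = resid r by apply/val_inj.
  by rewrite eqxx /= -divn_eq vent_ord bvec_ge // eqxx.
rewrite vent_bvec; last by have := divn_eq r n; lia.
by rewrite -val_eqE /= gtn_eqF.
Qed.

Lemma pdeg_bflat (r : 'I_N) : pdeg (bflat r) = (r %/ n)%N.
Proof.
apply: (@pdeg_eq _ _ _ _ _ (resid r) 0) => [i j|].
  by rewrite (ord1 j); apply/leq_sizeP => t; apply: coef_bflat_high.
by rewrite coef_bflat_top // eqxx oner_neq0.
Qed.

Lemma LV_bflat (r : 'I_N) : LV (bflat r) (resid r) 0 = 1.
Proof. by rewrite mxE pdeg_bflat coef_bflat_top // eqxx. Qed.

Lemma bflat_lastnz (r : 'I_N) : is_lastnz (LV (bflat r)) (resid r).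
Proof.
split=> [|j lt_rj]; first by rewrite LV_bflat oner_neq0.
by rewrite mxE pdeg_bflat coef_bflat_top ?(ltnW lt_rj) // -val_eqE /= gtn_eqF.
Qed.

Lemma bflat_syz (r : 'I_N) : ~~ pivotal A r -> a *m bflat r = 0.
Proof. by move=> np_r; apply/flat_syzP/bvec_ker. Qed.

Local Notation qt := (qtilde A n).

Lemma qtilde_np (r : 'I_N) : r \in qt -> ~~ pivotal A r.
Proof. by rewrite inE => /andP[]. Qed.

Lemma qtilde_min (r c : 'I_N) :
  r \in qt -> ~~ pivotal A c -> resid c = resid r -> (r <= c)%N.
Proof.
rewrite inE => /andP[_ /forallP r_min] np_c /(congr1 val) /= eq_cr.
by have := r_min c; rewrite np_c eq_cr eqxx.
Qed.

Lemma qtilde_resid_inj (r1 r2 : 'I_N) :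
  r1 \in qt -> r2 \in qt -> resid r1 = resid r2 -> r1 = r2.
Proof.
move=> qt_r1 qt_r2 eq_r12; apply/val_inj/eqP; rewrite eqn_leq.
by rewrite (qtilde_min qt_r1 (qtilde_np qt_r2)) ?(qtilde_min qt_r2 (qtilde_np qt_r1)).
Qed.

Lemma qtilde_exists (c : 'I_N) : ~~ pivotal A c -> exists2 r, r \in qt & resid r = resid c.
Proof.
move=> np_c; pose P i := ~~ pivotal A i && (resid i == resid c).
have [r /andP[np_r /eqP eq_rc] r_min] := @arg_minnP _ c P val (introT andP (conj np_c (eqxx _))).
exists r => //; rewrite inE np_r; apply/forallP => i; apply/implyP => /andP[np_i eq_ir].
by apply: r_min; rewrite /P np_i -eq_rc; apply/eqP/val_inj/eqP.
Qed.

Definition missing (rho : 'I_n) := ~~ [exists r in qt, resid r == rho].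

Lemma missingPn rho : reflect (exists2 r, r \in qt & resid r = rho) (~~ missing rho).
Proof.
rewrite negbK; apply: (iffP existsP) => [[r /andP[qt_r /eqP]]|[r qt_r eq_r]].
  by exists r.
by exists r; rewrite qt_r eq_r eqxx.
Qed.

Lemma missing_pivotal rho (c : 'I_N) : missing rho -> resid c = rho -> pivotal A c.
Proof.
move=> miss eq_c; apply: contraLR miss => /qtilde_exists[r qt_r eq_r].
by apply/missingPn; exists r; rewrite ?eq_r.
Qed.

Lemma missing_syz rho (h : 'cV[{poly K}]_n) :
  missing rho -> a *m h = 0 -> (pdeg h <= d)%N -> ~ is_lastnz (LV h) rho.
Proof.
move=> miss syz_h le_hd /(syz_lastnz_not_pivotal syz_h le_hd)[c eq_c].
by rewrite (missing_pivotal miss) // eq_c resid_divmod.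
Qed.

Lemma missing_coef_neq0 rho : missing rho -> a 0 rho != 0.
Proof.
move=> miss; apply/negP => /eqP a_rho0; pose e : 'cV[{poly K}]_n := delta_mx rho 0.
have e_size i j : (size (e i j) <= 1)%N.
  by rewrite mxE; case: (_ && _); rewrite ?size_poly1 ?size_poly0.
have pdeg_e : pdeg e = 0%N.
  by apply: (pdeg_eq (i := rho) (j := 0) e_size); rewrite !mxE !eqxx mulr1n coef1 oner_neq0.
apply: (missing_syz miss (h := e)); rewrite ?pdeg_e //.
  by rewrite -colE; apply/matrixP => i j; rewrite (ord1 i) (ord1 j) !mxE a_rho0.
split=> [|j lt_rj]; rewrite !mxE pdeg_e ?eqxx /= ?mulr1n ?coef1 ?oner_neq0 //.
by rewrite -val_eqE /= gtn_eqF // coef0.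
Qed.

(* Two missing residues r1, r2 would be refuted by the syzygy a_r2 e_r1 - a_r1 e_r2,
   of degree at most d. *)
Lemma missing_uniq r1 r2 : missing r1 -> missing r2 -> r1 = r2.
Proof.
move=> miss1 miss2; apply/eqP/negPn/negP => neq12.
pose h : 'cV[{poly K}]_n := a 0 r2 *: delta_mx r1 0 - a 0 r1 *: delta_mx r2 0.
have hE i : h i 0 = (if i == r1 then a 0 r2 else 0) - (if i == r2 then a 0 r1 else 0).
  by rewrite !mxE !eqxx !andbT; case: (i == r1); case: (i == r2); rewrite ?mulr1 ?mulr0.
have syz_h : a *m h = 0.
  apply/matrixP => i j; rewrite (ord1 i) (ord1 j) mulmxBr -!scalemxAr -!colE.
  by rewrite [LHS]mxE [_ *: _]lock !mxE -lock !mxE mulrC subrr.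
have le_hd : (pdeg h <= d)%N.
  apply: pdeg_leq => i j; rewrite (ord1 j) hE; apply/leq_sizeP => t lt_t.
  have a_t r : (a 0 r)`_t = 0 := leq_sizeP _ _ (size_a r) t lt_t.
  by rewrite coefB; case: (i == r1); case: (i == r2); rewrite ?a_t ?coef0 ?subr0.
have h_neq0 : h != 0.
  apply: contraNneq (missing_coef_neq0 miss2) => h0.
  by have := hE r1; rewrite h0 mxE eqxx (negbTE neq12) subr0 => <-.
have [rho h_last] := lastnz_exists (LV_neq0 h_neq0).
have : (rho == r1) || (rho == r2).
  move: h_last.1; rewrite mxE hE; case: (rho == r1) => //; case: (rho == r2) => //.
  by rewrite subrr coef0 eqxx.
by case/orP=> /eqP eq_rho; [move: miss1 | move: miss2];
  rewrite -eq_rho => /missing_syz /(_ syz_h le_hd).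
Qed.

Lemma missing_family_eq0 rho (h : 'cV[{poly K}]_n) :
  (forall rho', missing rho' -> rho' = rho) -> a *m h = 0 -> is_lastnz (LV h) rho -> a = 0.
Proof.
move=> miss_rho syz_h h_last.
pose f r := if [pick c in qt | resid c == r] is Some c then bflat c else h.
apply: (@syz_lastnz_family_eq0 _ _ a f) => r; rewrite /f.
  by case: pickP => [c /andP[qt_c _]|_] //; exact/bflat_syz/qtilde_np.
case: pickP => [c /andP[_ /eqP <-]|none]; first exact: bflat_lastnz.
rewrite (miss_rho r) //; apply/existsPn => c; exact/negbT/none.
Qed.

Hypothesis a_neq0 : a != 0.

Lemma missing_exists : exists rho, missing rho.
Proof.
apply/existsP; apply: contraR a_neq0 => /existsPn all_rep.
have [r qt_r _] := missingPn (resid 0) (all_rep _).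
apply/eqP/(@missing_family_eq0 (resid r) (bflat r)) => [rho||].
- by rewrite (negbTE (all_rep rho)).
- exact/bflat_syz/qtilde_np.
- exact: bflat_lastnz.
Qed.

Lemma syz_lastnz_represented rho (h : 'cV[{poly K}]_n) :
  a *m h = 0 -> is_lastnz (LV h) rho -> ~~ missing rho.
Proof.
move=> syz_h h_last; apply: contra a_neq0 => miss; apply/eqP.
by apply: (missing_family_eq0 _ syz_h h_last) => rho' miss'; apply: missing_uniq.
Qed.

Lemma card_qtilde : #|qt| = (n - 1)%N.
Proof.
have [rho0 miss0] := missing_exists.
rewrite -(@card_in_imset _ _ (fun r : 'I_N => resid r)); last exact: qtilde_resid_inj.
have -> : [set resid r | r : 'I_N in qt] = [set~ rho0].
  apply/setP => rho; rewrite !inE; apply/imsetP/idP => [[r qt_r ->]|neq_rho].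
    by apply: contraL miss0 => /eqP <-; apply/missingPn; exists r.
  have /missingPn[r qt_r <-] : ~~ missing rho.
    by apply: contra neq_rho => miss; rewrite (missing_uniq miss miss0).
  by exists r.
by rewrite cardsC1 card_ord subn1.
Qed.

Lemma qtilde_deg_le (r : 'I_N) (h : 'cV[{poly K}]_n) :
  r \in qt -> a *m h = 0 -> is_lastnz (LV h) (resid r) -> (r %/ n <= pdeg h)%N.
Proof.
move=> qt_r syz_h h_last; rewrite leqNgt; apply/negP => lt_hr.
have lt_rd : (r %/ n < d + 1)%N by rewrite ltn_divLR // [X in (_ < X)%N]mulnC.
have [|c eq_c np_c] := syz_lastnz_not_pivotal syz_h _ h_last; first by lia.
have /(qtilde_min qt_r np_c) : resid c = resid r by rewrite eq_c resid_divmod.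
rewrite eq_c /=; have := divn_eq r n; have := ltn_pmod r n_gt0; nia.
Qed.

Local Notation us := [seq bflat r | r <- enum qt].

Lemma syz_span (h : 'cV[{poly K}]_n) : a *m h = 0 -> in_span us h.
Proof.
suff measure_ind m : forall h, a *m h = 0 ->
    (forall rho, is_lastnz (LV h) rho -> (pdeg h * n + rho < m)%N) -> in_span us h.
  by move=> syz_h; apply: (measure_ind ((pdeg h).+1 * n)%N) => // rho _; rewrite mulSnr ltn_add2l.
elim: m => [|m IHm] {}h syz_h h_lt; have [->|h_neq0] := eqVneq h 0; try exact: in_span0;
  have [rho h_last] := lastnz_exists (LV_neq0 h_neq0); first by have := h_lt rho h_last.
have /missingPn[r qt_r eq_r] := syz_lastnz_represented syz_h h_last.
rewrite -eq_r in h_last h_lt.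
have le_rh : (pdeg (bflat r) <= pdeg h)%N by rewrite pdeg_bflat qtilde_deg_le.
have := LV_reduce le_rh (bflat_lastnz r) (LV_bflat r) h_last.
set h' := h - _ *: bflat r => h'_lt.
have -> : h = h' + (LV h (resid r) 0)%:P * 'X^(pdeg h - pdeg (bflat r)) *: bflat r.
  by rewrite subrK.
apply: in_spanD; last by apply/in_spanZ/map_f; rewrite mem_enum.
apply: IHm => [|rho' /h'_lt]; last by have := h_lt _ h_last; lia.
by rewrite mulmxBr -scalemxAr bflat_syz ?qtilde_np // scaler0 syz_h subr0.
Qed.

Lemma N_gt0 : (0 < N)%N. Proof. by rewrite muln_gt0 n_gt0 addn1. Qed.
Local Notation qnth i := (nth (Ordinal N_gt0) (enum qt) i).

Lemma size_bflat_seq : size us = #|qt|.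
Proof. by rewrite size_map cardE. Qed.

Lemma bflat_seq_nth i : (i < size us)%N -> qnth i \in qt /\ us`_i = bflat (qnth i).
Proof.
rewrite size_map => lt_i; rewrite -mem_enum mem_nth //.
by split=> //; rewrite (nth_map (Ordinal N_gt0)).
Qed.

Lemma bflat_seq_resid_inj i j : (i < size us)%N -> (j < size us)%N ->
  resid (qnth i) = resid (qnth j) -> i = j.
Proof.
move=> lt_i lt_j /(qtilde_resid_inj (bflat_seq_nth lt_i).1 (bflat_seq_nth lt_j).1) /eqP.
by rewrite nth_uniq ?enum_uniq -?(size_map (fun r => bflat r)) // => /eqP.
Qed.

Lemma bflat_seq_lastnz i : (i < size us)%N -> is_lastnz (LV us`_i) (resid (qnth i)).
Proof. by move=> /bflat_seq_nth[_ ->]; exact: bflat_lastnz. Qed.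

Lemma mu_basis_bflat : mu_basis a us.
Proof.
have uniq_us : uniq us.
  rewrite map_inj_in_uniq ?enum_uniq // => r1 r2; rewrite !mem_enum => qt_r1 qt_r2 eq_b.
  apply: qtilde_resid_inj qt_r1 qt_r2 _; apply: lastnz_uniq (bflat_lastnz r1) _.
  by rewrite eq_b; exact: bflat_lastnz.
have pos_inj : injective (fun i : 'I_(size us) => resid (qnth i)).
  by move=> i j /(bflat_seq_resid_inj (ltn_ord i) (ltn_ord j)) /val_inj.
rewrite /mu_basis undup_id //; split.
- by rewrite size_bflat_seq card_qtilde.
- apply/freeP => k; apply: (lastnz_free (pos := fun i => resid (qnth i))) => [i j|i].
    by move/(bflat_seq_resid_inj _ _); rewrite size_bflat_seq => /(_ (ltn_ord i) (ltn_ord j)) /val_inj.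
  have lt_i : (i < size us)%N by rewrite size_bflat_seq.
  by rewrite (nth_map 0) //; exact: bflat_seq_lastnz.
- by apply/allP => h /mapP[r]; rewrite mem_enum => qt_r ->; rewrite /in_syz bflat_syz ?qtilde_np.
- exact: syz_span.
- by move=> p; apply: LV_lastnz_poly_free pos_inj _ => i; exact: bflat_seq_lastnz.
Qed.

End Linearization.

Theorem theorem1 (K : fieldType) (n d : nat) (a : 'rV[{poly K}]_n)
  (alpha : 'I_(n * (d + 1)) -> 'I_(n * (d + 1)) -> K) :
  (1 < n)%N -> a != 0 -> pdeg a = d ->
  (forall i : 'I_(n * (d + 1)), ~~ pivotal (Amat d a) i ->
     col i (Amat d a) =
       \sum_(j < n * (d + 1) | pivotal (Amat d a) j && (j < i)%N)
          alpha i j *: col j (Amat d a)) ->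
  mu_basis a [seq flat (bvec (Amat d a) alpha r) | r <- enum (qtilde (Amat d a) n)].
Proof.
move=> n_gt1 a_neq0 pdeg_a alpha_spec.
exact (mu_basis_bflat (ltnW n_gt1) pdeg_a alpha_spec a_neq0).
Qed.
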